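(* Let $\vartheta_1,\ldots,\vartheta_t$ be real numbers, $d$ a positive integer, $\tau_1,\tau_2$ positive real numbers, and $\sigma$ a non-decreasing positive function on the positive integers with $\lim_{n\to\infty}\sigma(n)=\infty$. Assume there is a sequence $(P_n)_{n\ge0}$ of polynomials in $\mathbb{Z}[X_1,\ldots,X_t]$, with $P_n$ of total degree at most $d$ and length at most $e^{\sigma(n)}$, such that $$e^{-(\tau_1+o(1))\sigma(n)}\le|P_n(\vartheta_1,\ldots,\vartheta_t)|\le e^{-(\tau_2+o(1))\sigma(n+1)}$$ as $n\to\infty$. Then $$\tau_2\le\left(\binom{d+t}{t}-1\right)(1+\tau_1-\tau_2).$$
   Context: The length of a polynomial with integer coefficients is the sum of the absolute values of its coefficients. $o(1)$ denotes quantities tending to $0$ as $n\to\infty$. *)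

From Stdlib Require Import Reals Lra ZArith List.
Import ListNotations.
Open Scope R_scope.

(* Exponent vectors of monomials in t variables of total degree <= d:
   lists of length t of naturals with sum <= d. *)
Fixpoint monos (t d : nat) : list (list nat) :=
  match t with
  | O => [nil]
  | S t' => flat_map (fun k => map (cons k) (monos t' (d - k))) (seq 0 (S d))
  end.

Fixpoint monom (theta : nat -> R) (i : nat) (a : list nat) : R :=
  match a with
  | nil => 1
  | k :: r => theta i ^ k * monom theta (S i) r
  end.

(* A polynomial in Z[X_0,...,X_{t-1}] of total degree <= d is given by its
   integer coefficients c alpha for alpha in monos t d. *)
Definition poly_eval (t d : nat) (c : list nat -> Z) (theta : nat -> R) : R :=
  fold_right (fun a acc => IZR (c a) * monom theta 0 a + acc) 0 (monos t d).

Definition poly_length (t d : nat) (c : list nat -> Z) : R :=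
  fold_right (fun a acc => Rabs (IZR (c a)) + acc) 0 (monos t d).

Definition tends_to_zero (e : nat -> R) : Prop := Un_cv e 0.

(* By Dirichlet's pigeonhole principle, for every Q there is a common denominator
   q <= Q^N, N = C(d+t,t) - 1, such that every q P_n(theta) lies within
   L(P_n)/Q <= e^{sigma(n)}/Q of an integer X_n. While 2 e^{sigma(n)} < Q, a nonzero X_n
   forces |P_n(theta)| >= 1/(2q), so e^{tau2 sigma(n+1)} < 2q; a vanishing X_n forces
   qQ <= e^{(1+tau1) sigma(n)}. At the first index s where X vanishes or Q <= 2 e^{sigma(s)}
   this yields Q <~ e^{(1+tau1-tau2) sigma(s)} and e^{tau2 sigma(s)} <~ q <= Q^N. If
   tau2 > N (1+tau1-tau2), the second bound keeps sigma(s) bounded, so the first keeps Q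
   bounded, which is absurd since Q is arbitrary. *)
From Stdlib Require Import Reals Lra Lia List ZArith Classical.
Import ListNotations.
Open Scope R_scope.

Lemma exp_le_exp x y : x <= y -> exp x <= exp y.
Proof. intros [Hlt | ->]; [left; apply exp_increasing | right]; auto. Qed.

Lemma exp_le_inv x y : exp x <= exp y -> x <= y.
Proof.
  intros H; destruct (Rle_lt_dec x y) as [Hle | Hlt]; auto.
  apply exp_increasing in Hlt; lra.
Qed.

Lemma exp_pow x n : exp x ^ n = exp (INR n * x).
Proof.
  induction n as [|n IH]; [simpl; rewrite Rmult_0_l, exp_0; auto|].
  rewrite S_INR; simpl; rewrite IH, <- exp_plus; f_equal; ring.
Qed.

Lemma first_hit (P : nat -> Prop) n0 k : ~ P n0 -> P (n0 + k)%nat ->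
  exists m, (n0 <= m)%nat /\ (forall j, (n0 <= j <= m)%nat -> ~ P j) /\ P (S m).
Proof.
  intros H0 Hk.
  destruct (dec_inh_nat_subset_has_unique_least_element (fun i => P (n0 + i)%nat))
    as [i [[HPi Hleast] _]]; [intros i; apply classic | eauto |].
  destruct i as [|i]; [rewrite Nat.add_0_r in HPi; contradiction|].
  exists (n0 + i)%nat; split; [lia|]; split.
  - intros j Hj HPj. specialize (Hleast (j - n0)%nat).
    replace (n0 + (j - n0))%nat with j in Hleast by lia. specialize (Hleast HPj); lia.
  - rewrite <- Nat.add_succ_r; auto.
Qed.

Lemma pigeonhole_nat {B : Type} (g : nat -> B) (cells : list B) (M : nat) :
  (forall j, (j <= M)%nat -> In (g j) cells) -> (length cells <= M)%nat ->
  exists i j, (i < j <= M)%nat /\ g i = g j.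
Proof.
  intros Hin Hlen.
  assert (Hdup : ~ NoDup (map g (seq 0 (S M)))).
  { intros Hnd.
    assert (Hincl : incl (map g (seq 0 (S M))) cells).
    { intros b (j & <- & Hj)%in_map_iff; apply Hin; apply in_seq in Hj; lia. }
    pose proof (NoDup_incl_length Hnd Hincl) as Hle.
    rewrite length_map, length_seq in Hle; lia. }
  apply NNPP; intros Hno; apply Hdup.
  apply NoDup_map_NoDup_ForallPairs; [|apply seq_NoDup].
  intros i j Hi Hj Hg; apply in_seq in Hi, Hj.
  destruct (Nat.lt_total i j) as [Hij | [Hij | Hij]]; auto; exfalso; apply Hno.
  - exists i, j; split; [lia | auto].
  - exists j, i; split; [lia | auto].
Qed.

Fixpoint boxes (L Q : nat) : list (list nat) :=
  match L with
  | O => [nil]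
  | S L' => flat_map (fun k => map (cons k) (boxes L' Q)) (seq 0 Q)
  end.

Lemma length_boxes L Q : length (boxes L Q) = (Q ^ L)%nat.
Proof.
  induction L as [|L IH]; simpl; auto.
  rewrite (flat_map_constant_length (c := (Q ^ L)%nat)), length_seq; [lia|].
  intros k _; rewrite length_map; auto.
Qed.

Lemma in_boxes L Q b : length b = L -> (forall x, In x b -> (x < Q)%nat) -> In b (boxes L Q).
Proof.
  revert b; induction L as [|L IH]; intros [|x b] Hl Hb; simpl in *; try lia; auto.
  apply in_flat_map; exists x; split.
  - apply in_seq; specialize (Hb x (or_introl eq_refl)); lia.
  - apply in_map, IH; auto.
Qed.

Definition frac (x : R) : R := x - IZR (Zfloor x).

Lemma frac_bounds x : 0 <= frac x < 1.
Proof. unfold frac; pose proof (Zfloor_bound x); lra. Qed.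

Lemma dirichlet {A : Type} (f : A -> R) (l : list A) (Q : nat) : (1 <= Q)%nat ->
  exists q : nat, (1 <= q <= Q ^ length l)%nat /\
    exists p : A -> Z, forall a, In a l -> Rabs (INR q * f a - IZR (p a)) < / INR Q.
Proof.
  intros HQ.
  assert (HQr : 0 < INR Q) by (apply lt_0_INR; lia).
  set (digit j x := Zfloor (INR Q * frac (INR j * x))).
  assert (Hdigit : forall j x, (0 <= digit j x < Z.of_nat Q)%Z).
  { intros j x; pose proof (frac_bounds (INR j * x)) as Hf.
    pose proof (Zfloor_bound (INR Q * frac (INR j * x))) as Hfl; split.
    - apply Zfloor_lub; simpl; nra.
    - apply lt_IZR; rewrite <- INR_IZR_INZ; unfold digit; nra. }
  set (cell j := map (fun a => Z.to_nat (digit j (f a))) l).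
  destruct (pigeonhole_nat cell (boxes (length l) Q) (Q ^ length l)) as (i & j & Hij & Hcell).
  { intros j _; apply in_boxes; [unfold cell; apply length_map|].
    intros x (a & <- & _)%in_map_iff; specialize (Hdigit j (f a)); lia. }
  { rewrite length_boxes; lia. }
  exists (j - i)%nat; split; [lia|].
  exists (fun a => Zfloor (INR j * f a) - Zfloor (INR i * f a))%Z.
  intros a Ha.
  assert (Hsame : digit i (f a) = digit j (f a)).
  { pose proof (ext_in_map Hcell a Ha) as E; simpl in E.
    pose proof (Hdigit i (f a)); pose proof (Hdigit j (f a)); lia. }
  pose proof (Zfloor_bound (INR Q * frac (INR i * f a))) as Hi.
  pose proof (Zfloor_bound (INR Q * frac (INR j * f a))) as Hj.
  fold (digit i (f a)) in Hi; fold (digit j (f a)) in Hj; rewrite Hsame in Hi.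
  unfold frac in Hi, Hj.
  rewrite minus_INR, minus_IZR by lia.
  apply Rabs_def1; apply (Rmult_lt_reg_l (INR Q)); auto;
    rewrite ?Rmult_opp_opp, ?Ropp_mult_distr_r_reverse, Rinv_r by lra; nra.
Qed.

Definition approximates (L H : nat -> R) (Q q : nat) (X : nat -> Z) : Prop :=
  forall n, Rabs (IZR (X n) - INR q * L n) <= H n / INR Q.

Section LinearForms.
Variables (A : Type) (c : A -> Z).

Definition lin_form (v : A -> R) (l : list A) : R :=
  fold_right (fun a acc => IZR (c a) * v a + acc) 0 l.

Definition zlin_form (p : A -> Z) (l : list A) : Z :=
  fold_right (fun a acc => c a * p a + acc)%Z 0%Z l.

Definition l1_norm (l : list A) : R :=
  fold_right (fun a acc => Rabs (IZR (c a)) + acc) 0 l.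

Lemma IZR_zlin_form p l : IZR (zlin_form p l) = lin_form (fun a => IZR (p a)) l.
Proof. induction l as [|a l IH]; simpl; auto; rewrite plus_IZR, mult_IZR, IH; auto. Qed.

Lemma lin_form_approx (v : A -> R) (p : A -> Z) (q e : R) l :
  (forall a, In a l -> Rabs (q * v a - IZR (p a)) <= e) ->
  Rabs (IZR (zlin_form p l) - q * lin_form v l) <= l1_norm l * e.
Proof.
  rewrite IZR_zlin_form; induction l as [|a l IH]; intros Happ; simpl.
  - rewrite Rmult_0_r, Rminus_0_r, Rabs_R0; lra.
  - replace (IZR (c a) * IZR (p a) + lin_form (fun a => IZR (p a)) l - q * (IZR (c a) * v a + lin_form v l))
      with (- (IZR (c a) * (q * v a - IZR (p a))) + (lin_form (fun a => IZR (p a)) l - q * lin_form v l))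
      by ring.
    eapply Rle_trans; [apply Rabs_triang|].
    rewrite Rabs_Ropp, Rabs_mult, Rmult_plus_distr_r.
    apply Rplus_le_compat; [apply Rmult_le_compat_l; [apply Rabs_pos | auto with datatypes]|].
    apply IH; auto with datatypes.
Qed.

End LinearForms.

Lemma monos_head t d : exists rest, monos t d = repeat 0%nat t :: rest.
Proof.
  revert d; induction t as [|t IH]; intros d; [exists nil; reflexivity|].
  simpl; rewrite Nat.sub_0_r; destruct (IH d) as [rest ->]; eexists; reflexivity.
Qed.

Lemma monom_repeat_0 theta t i : monom theta i (repeat 0%nat t) = 1.
Proof. revert i; induction t as [|t IH]; intros i; simpl; [|rewrite IH]; ring. Qed.

Lemma poly_simultaneous_approx t d theta (P : nat -> list nat -> Z) (Q : nat) : (1 <= Q)%nat ->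
  exists q : nat, (1 <= q <= Q ^ (length (monos t d) - 1))%nat /\
    exists X, approximates (fun n => poly_eval t d (P n) theta) (fun n => poly_length t d (P n)) Q q X.
Proof.
  (* The constant monomial comes first and is matched exactly by [q * c_0]; only the
     others are approximated, whence the exponent [length (monos t d) - 1]. *)
  intros HQ; destruct (monos_head t d) as [rest Hm].
  assert (HQr : 0 < / INR Q) by (apply Rinv_0_lt_compat, lt_0_INR; lia).
  destruct (dirichlet (monom theta 0) rest Q HQ) as (q & Hq & p & Hp).
  exists q; split; [rewrite Hm; simpl length; rewrite Nat.sub_succ, Nat.sub_0_r; auto|].
  exists (fun n => P n (repeat 0%nat t) * Z.of_nat q + zlin_form _ (P n) p rest)%Z.
  intros n; unfold poly_eval, poly_length; rewrite Hm; simpl.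
  rewrite monom_repeat_0, plus_IZR, mult_IZR, <- INR_IZR_INZ.
  fold (lin_form _ (P n) (monom theta 0) rest) (l1_norm _ (P n) rest).
  replace (IZR (P n (repeat 0%nat t)) * INR q + IZR (zlin_form _ (P n) p rest) -
           INR q * (IZR (P n (repeat 0%nat t)) * 1 + lin_form _ (P n) (monom theta 0) rest))
    with (IZR (zlin_form _ (P n) p rest) - INR q * lin_form _ (P n) (monom theta 0) rest) by ring.
  eapply Rle_trans; [apply lin_form_approx with (e := / INR Q); intros a Ha; left; auto|].
  unfold Rdiv; apply Rmult_le_compat_r; [lra|].
  pose proof (Rabs_pos (IZR (P n (repeat 0%nat t)))); lra.
Qed.

Lemma length_flat_map_cons (h : nat -> list (list nat)) s :
  length (flat_map (fun k => map (cons k) (h k)) s) = fold_right (fun k acc => length (h k) + acc)%nat 0%nat s.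
Proof. induction s as [|k s IH]; simpl; auto; rewrite length_app, length_map; lia. Qed.

Lemma fold_right_seq_shift (F : nat -> nat) n a :
  fold_right (fun k acc => F k + acc)%nat 0%nat (seq (S a) n) =
  fold_right (fun k acc => F (S k) + acc)%nat 0%nat (seq a n).
Proof. revert a; induction n as [|n IH]; intros a; simpl; auto. Qed.

Lemma length_monos_S t d :
  length (monos (S t) (S d)) = (length (monos t (S d)) + length (monos (S t) d))%nat.
Proof.
  cbn [monos]; rewrite !length_flat_map_cons.
  change (seq 0 (S (S d))) with (0%nat :: seq 1 (S d)); cbn [fold_right].
  rewrite fold_right_seq_shift, Nat.sub_0_r; reflexivity.
Qed.

Lemma length_monos_0 t : length (monos t 0) = 1%nat.
Proof. induction t as [|t IH]; simpl; auto; rewrite length_app, length_map; simpl; lia. Qed.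

Lemma length_monos t d : INR (length (monos t d)) = C (d + t) t.
Proof.
  revert d; induction t as [|t IHt]; intros d.
  - unfold C; rewrite Nat.add_0_r, Nat.sub_0_r; simpl.
    field; apply INR_fact_neq_0.
  - induction d as [|d IHd].
    + rewrite length_monos_0; simpl Nat.add; unfold C; rewrite Nat.sub_diag; simpl (fact 0).
      rewrite Rmult_1_r; unfold Rdiv; rewrite Rinv_r; auto; apply INR_fact_neq_0.
    + rewrite length_monos_S, plus_INR, IHt, IHd.
      replace (S d + S t)%nat with (S (S d + t)) by lia.
      replace (d + S t)%nat with (S d + t)%nat by lia.
      apply pascal; lia.
Qed.

Lemma approx_nonzero (Q q l h : R) (x : Z) : 0 < Q -> 0 <= q -> x <> 0%Z ->
  Rabs (IZR x - q * l) <= h / Q -> 2 * h < Q -> 1 < 2 * (q * Rabs l).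
Proof.
  intros HQ Hq Hx Happ Hh.
  assert (Hx1 : 1 <= Rabs (IZR x)) by (rewrite Rabs_Zabs; apply IZR_le; lia).
  assert (Hsmall : h / Q < / 2).
  { apply (Rmult_lt_reg_r Q); auto; unfold Rdiv; rewrite Rmult_assoc, Rinv_l; lra. }
  pose proof (Rabs_triang_inv (IZR x) (IZR x - q * l)) as Htri.
  replace (IZR x - (IZR x - q * l)) with (q * l) in Htri by ring.
  rewrite Rabs_mult, (Rabs_pos_eq q) in Htri by auto. lra.
Qed.

Lemma approx_zero (Q q l h : R) : 0 < Q -> 0 <= q ->
  Rabs (IZR 0 - q * l) <= h / Q -> q * Rabs l * Q <= h.
Proof.
  intros HQ Hq Happ.
  rewrite Rminus_0_l, Rabs_Ropp, Rabs_mult, Rabs_pos_eq in Happ by auto.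
  apply (Rmult_le_compat_r Q) in Happ; [|lra].
  replace (h / Q * Q) with h in Happ by (field; lra); exact Happ.
Qed.

Section ExponentBound.

Variables (N : nat) (alpha beta : R) (sigma L H : nat -> R) (n1 : nat).
Hypothesis Halpha : 0 < alpha.
Hypothesis Hpos : forall n, (n1 <= n)%nat -> 0 < sigma n.
Hypothesis Hmono : forall n, (n1 <= n)%nat -> sigma n <= sigma (S n).
Hypothesis Hinf : cv_infty sigma.
Hypothesis HH : forall n, (n1 <= n)%nat -> H n <= exp (sigma n).
Hypothesis Hlow : forall n, (n1 <= n)%nat -> exp (- (alpha * sigma n)) <= Rabs (L n).
Hypothesis Hup : forall n, (n1 <= n)%nat -> Rabs (L n) <= exp (- (beta * sigma (S n))).
Hypothesis Happrox : forall Q, (1 <= Q)%nat ->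
  exists q, (1 <= q <= Q ^ N)%nat /\ exists X, approximates L H Q q X.

Lemma beta_le_alpha : beta <= alpha.
Proof.
  apply Rnot_lt_le; intros Hab.
  pose proof (exp_le_inv _ _ (Rle_trans _ _ _ (Hlow n1 (le_n _)) (Hup n1 (le_n _)))).
  pose proof (Hpos n1 (le_n _)); pose proof (Hmono n1 (le_n _)).
  assert (alpha * sigma n1 < beta * sigma n1) by (apply Rmult_lt_compat_r; auto).
  assert (beta * sigma n1 <= beta * sigma (S n1)) by (apply Rmult_le_compat_l; lra).
  lra.
Qed.

Section FixedDenominator.

Variables (Q q : nat) (X : nat -> Z).
Hypothesis Hq : (1 <= q)%nat.
Hypothesis HX : approximates L H Q q X.
Hypothesis HQ : 2 * exp ((1 + alpha) * sigma n1) < INR Q.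

Let Hqr : 1 <= INR q.
Proof. apply (le_INR 1); auto. Qed.

Let HQr : 0 < INR Q.
Proof. pose proof (exp_pos ((1 + alpha) * sigma n1)); lra. Qed.

Lemma growth_at_nonzero n : (n1 <= n)%nat -> 2 * exp (sigma n) < INR Q -> X n <> 0%Z ->
  exp (beta * sigma (S n)) < 2 * INR q.
Proof.
  intros Hn Hadm HXn.
  pose proof (approx_nonzero (INR Q) (INR q) (L n) (H n) (X n) HQr ltac:(lra) HXn (HX n)
                ltac:(specialize (HH n Hn); lra)) as Hlarge.
  assert (Hq_up : 1 < 2 * INR q * exp (- (beta * sigma (S n)))).
  { specialize (Hup n Hn); nra. }
  rewrite exp_Ropp in Hq_up; pose proof (exp_pos (beta * sigma (S n))).
  apply (Rmult_lt_compat_r (exp (beta * sigma (S n)))) in Hq_up; auto.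
  rewrite Rmult_assoc, Rinv_l in Hq_up; lra.
Qed.

Lemma bound_at_zero n : (n1 <= n)%nat -> X n = 0%Z -> INR q * INR Q <= exp ((1 + alpha) * sigma n).
Proof.
  intros Hn HXn; pose proof (HX n) as Happ; rewrite HXn in Happ.
  apply approx_zero in Happ; [|auto|lra].
  specialize (HH n Hn); specialize (Hlow n Hn).
  assert (Hqq : INR q * INR Q * exp (- (alpha * sigma n)) <= exp (sigma n)).
  { assert (0 <= INR q * INR Q) by nra. nra. }
  replace ((1 + alpha) * sigma n) with (sigma n + alpha * sigma n) by ring.
  rewrite exp_plus; rewrite exp_Ropp in Hqq; pose proof (exp_pos (alpha * sigma n)).
  apply (Rmult_le_compat_r (exp (alpha * sigma n))) in Hqq; [|lra].
  rewrite Rmult_assoc, Rinv_l, Rmult_1_r in Hqq; lra.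
Qed.

Lemma transition_index : exists s, (n1 < s)%nat /\
  INR Q <= 2 * exp ((1 + alpha - beta) * sigma s) /\ exp (beta * sigma s) < 2 * INR q.
Proof.
  pose proof beta_le_alpha as Hba.
  (* [s] is the first index after [n1] at which [X] vanishes or [Q] stops being large
     compared with [exp (sigma s)]; [X] does not vanish just before it. *)
  set (stop n := INR Q <= 2 * exp (sigma n) \/ X n = 0%Z).
  assert (Hstart : ~ stop n1).
  { pose proof (Hpos n1 (le_n _)).
    assert (exp (sigma n1) <= exp ((1 + alpha) * sigma n1)) by (apply exp_le_exp; nra).
    intros [Hs | Hs]; [lra|]. pose proof (bound_at_zero n1 (le_n _) Hs); nra. }
  assert (Hend : exists k, stop (n1 + k)%nat).
  { destruct (Hinf (INR Q)) as [k Hk]; exists k; left.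
    pose proof (Hk (n1 + k)%nat ltac:(lia)); pose proof (exp_ineq1_le (sigma (n1 + k)%nat)); lra. }
  destruct Hend as [k Hk].
  destruct (first_hit stop n1 k Hstart Hk) as (m & Hm & Hbefore & Hstop).
  assert (Hm_stop : ~ stop m) by (apply Hbefore; lia).
  assert (Hgrowth : exp (beta * sigma (S m)) < 2 * INR q).
  { apply growth_at_nonzero; [exact Hm | apply Rnot_le_lt | ]; intros Hz; apply Hm_stop;
      [left | right]; exact Hz. }
  exists (S m); split; [lia|]; split; auto.
  pose proof (Hpos (S m) ltac:(lia)) as Hs.
  destruct Hstop as [HQs | HXs].
  - enough (exp (sigma (S m)) <= exp ((1 + alpha - beta) * sigma (S m))) by lra.
    apply exp_le_exp; nra.
  - pose proof (bound_at_zero (S m) ltac:(lia) HXs) as Hqq.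
    replace ((1 + alpha) * sigma (S m)) with ((1 + alpha - beta) * sigma (S m) + beta * sigma (S m))
      in Hqq by ring.
    rewrite exp_plus in Hqq; pose proof (exp_pos ((1 + alpha - beta) * sigma (S m))); nra.
Qed.

End FixedDenominator.

Theorem exponent_bound : beta <= INR N * (1 + alpha - beta).
Proof.
  pose proof beta_le_alpha as Hba; pose proof (pos_INR N) as HN.
  apply Rnot_lt_le; intros Hcontra.
  set (kappa := 1 + alpha - beta); set (gamma := beta - INR N * kappa).
  assert (Hgamma : 0 < gamma) by (unfold gamma, kappa; lra).
  set (B := exp (1 + kappa * ((INR N + 1) / gamma))).
  pose proof (exp_pos ((1 + alpha) * sigma n1)); pose proof (exp_pos (1 + kappa * ((INR N + 1) / gamma))).
  destruct (INR_archimed 1 (2 * exp ((1 + alpha) * sigma n1) + B)) as [Q HQ]; [lra|].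
  rewrite Rmult_1_r in HQ.
  assert (HQ1 : (1 <= Q)%nat) by (destruct Q; [simpl in HQ; unfold B in HQ; lra | lia]).
  destruct (Happrox Q HQ1) as (q & Hq & X & HX).
  destruct (transition_index Q q X ltac:(lia) HX ltac:(unfold B in HQ; lra)) as (s & Hs & HQs & Hqs).
  pose proof (Hpos s ltac:(lia)) as Hsig.
  assert (He : 2 <= exp 1) by (pose proof (exp_ineq1_le 1); lra).
  assert (HQe : INR Q <= exp (1 + kappa * sigma s)).
  { rewrite exp_plus; pose proof (exp_pos (kappa * sigma s)); fold kappa in HQs; nra. }
  assert (HqQ : INR q <= exp (INR N * (1 + kappa * sigma s))).
  { rewrite <- exp_pow; eapply Rle_trans; [|apply pow_incr; split; [apply pos_INR | exact HQe]].
    rewrite <- pow_INR; apply le_INR; lia. }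
  (* [exp (beta * sigma s) < 2 q <= 2 Q ^ N] with [Q <= exp (1 + kappa * sigma s)] caps [sigma s],
     hence caps [Q] below [B]. *)
  assert (Hsig_small : gamma * sigma s < INR N + 1).
  { assert (Hexp : exp (beta * sigma s) < exp (1 + INR N * (1 + kappa * sigma s))).
    { rewrite exp_plus; pose proof (exp_pos (INR N * (1 + kappa * sigma s))); nra. }
    apply exp_lt_inv in Hexp; unfold gamma; nra. }
  assert (kappa * sigma s <= kappa * ((INR N + 1) / gamma)).
  { apply Rmult_le_compat_l; [unfold kappa; lra|].
    apply (Rmult_le_reg_l gamma); auto.
    replace (gamma * ((INR N + 1) / gamma)) with (INR N + 1) by (field; lra); lra. }
  assert (exp (1 + kappa * sigma s) <= B) by (apply exp_le_exp; lra).
  lra.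
Qed.

End ExponentBound.

Lemma eventual_exponent_bounds (tau1 tau2 : R) (sigma L : nat -> R) :
  (forall n, (1 <= n)%nat -> 0 < sigma n) ->
  (exists eps1 eps2 : nat -> R, tends_to_zero eps1 /\ tends_to_zero eps2 /\
     exists N : nat, forall n, (N <= n)%nat ->
       exp (- ((tau1 + eps1 n) * sigma n)) <= Rabs (L n) /\
       Rabs (L n) <= exp (- ((tau2 + eps2 n) * sigma (S n)))) ->
  forall eta, 0 < eta -> exists n1, (1 <= n1)%nat /\ forall n, (n1 <= n)%nat ->
    exp (- ((tau1 + eta) * sigma n)) <= Rabs (L n) /\
    Rabs (L n) <= exp (- ((tau2 - eta) * sigma (S n))).
Proof.
  intros Hpos (eps1 & eps2 & Heps1 & Heps2 & N0 & HN0) eta Heta.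
  destruct (Heps1 eta Heta) as [N1 HN1]; destruct (Heps2 eta Heta) as [N2 HN2].
  exists (Nat.max (Nat.max N1 N2) (Nat.max N0 1)); split; [lia|]; intros n Hn.
  specialize (HN1 n ltac:(lia)); specialize (HN2 n ltac:(lia)).
  unfold R_dist in HN1, HN2; rewrite Rminus_0_r in HN1, HN2.
  apply Rabs_def2 in HN1, HN2.
  destruct (HN0 n ltac:(lia)) as [Hlow Hup].
  pose proof (Hpos n ltac:(lia)); pose proof (Hpos (S n) ltac:(lia)); split.
  - eapply Rle_trans; [|exact Hlow]; apply exp_le_exp; nra.
  - eapply Rle_trans; [exact Hup|]; apply exp_le_exp; nra.
Qed.

Theorem mainTheorem4
  (t : nat) (theta : nat -> R) (d : nat) (tau1 tau2 : R) (sigma : nat -> R)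
  (P : nat -> list nat -> Z)
  (Hd : (1 <= d)%nat) (Htau1 : 0 < tau1) (Htau2 : 0 < tau2)
  (Hsig_pos : forall n, (1 <= n)%nat -> 0 < sigma n)
  (Hsig_mono : forall n m, (1 <= n)%nat -> (n <= m)%nat -> sigma n <= sigma m)
  (Hsig_inf : cv_infty sigma)
  (Hlen : forall n, (1 <= n)%nat -> poly_length t d (P n) <= exp (sigma n))
  (Hbounds : exists eps1 eps2 : nat -> R,
      tends_to_zero eps1 /\ tends_to_zero eps2 /\
      exists N : nat, forall n, (N <= n)%nat ->
        exp (- ((tau1 + eps1 n) * sigma n)) <= Rabs (poly_eval t d (P n) theta) /\
        Rabs (poly_eval t d (P n) theta) <= exp (- ((tau2 + eps2 n) * sigma (S n)))) :
  tau2 <= (C (d + t) t - 1) * (1 + tau1 - tau2).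
Proof.
  set (N := (length (monos t d) - 1)%nat).
  assert (HC : C (d + t) t - 1 = INR N).
  { destruct (monos_head t d) as [rest Hm].
    unfold N; rewrite minus_INR, length_monos; [reflexivity | rewrite Hm; simpl; lia]. }
  rewrite HC; pose proof (pos_INR N).
  apply Rle_plus_epsilon; intros eps Heps.
  set (eta := eps / (2 * INR N + 1)).
  assert (Heta : 0 < eta) by (apply Rdiv_lt_0_compat; lra).
  destruct (eventual_exponent_bounds tau1 tau2 sigma _ Hsig_pos Hbounds eta Heta) as (n1 & Hn1 & Hb).
  assert (Hexp : tau2 - eta <= INR N * (1 + (tau1 + eta) - (tau2 - eta))).
  { apply (exponent_bound N (tau1 + eta) (tau2 - eta) sigma
             (fun n => poly_eval t d (P n) theta) (fun n => poly_length t d (P n)) n1).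
    - lra.
    - intros n Hn; apply Hsig_pos; lia.
    - intros n Hn; apply Hsig_mono; lia.
    - exact Hsig_inf.
    - intros n Hn; apply Hlen; lia.
    - intros n Hn; apply Hb; auto.
    - intros n Hn; apply Hb; auto.
    - intros Q HQ; apply poly_simultaneous_approx; auto. }
  assert (eta * (2 * INR N + 1) = eps) by (unfold eta; field; lra).
  nra.
Qed.
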